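(* Let $V$ be a real Hilbert space with inner product $\langle\cdot,\cdot\rangle$, $Z=V\times\mathbb{R}\times\mathbb{R}$ with the product inner product, $D$ a linear operator on $V$, and $L$ a linear, self-adjoint, positive semidefinite operator on $V$. Let $E_{\mathrm{L}},E_{\mathrm{U}}$ be lower-bounded $C^1$ functionals on $V$ and $a_{\mathrm{X}}>-\inf_v E_{\mathrm{X}}(v)$ real constants ($\mathrm{X}=\mathrm{L},\mathrm{U}$). For $u\in V$ let $\phi_{\mathrm{X}}(u)=\nabla E_{\mathrm{X}}(u)/\big(2\sqrt{E_{\mathrm{X}}(u)+a_{\mathrm{X}}}\big)\in V$ (Fréchet derivative identified with an element of $V$), $\Phi_{\mathrm{X}}(u)(v)=\langle\phi_{\mathrm{X}}(u),v\rangle$, $\Phi_{\mathrm{X}}^*(u)(r)=r\phi_{\mathrm{X}}(u)$, and \[ \mathcal{L}(u)=\begin{bmatrix} I & 0 & 0\\ \Phi_{\mathrm{L}}(u) & 1 & 0\\ \Phi_{\mathrm{U}}(u) & 0 & 1\end{bmatrix} \begin{bmatrix} D & 0 & 0\\ 0&0&0\\0&0&0\end{bmatrix} \begin{bmatrix} I & \Phi_{\mathrm{L}}^*(u) & \Phi_{\mathrm{U}}^*(u)\\ 0&1&0\\0&0&1\end{bmatrix}. \] Define $\tilde E(u,r_{\mathrm{L}},r_{\mathrm{U}})=\frac12\langle u,Lu\rangle + r_{\mathrm{L}}^2-r_{\mathrm{U}}^2$, so $\nabla\tilde E(u,r_{\mathrm{L}},r_{\mathrm{U}})=[Lu,\,2r_{\mathrm{L}},\,-2r_{\mathrm{U}}]^T$.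 Let $\Delta t>0$, let $z^n=[u^n,r^n_{\mathrm{L}},r^n_{\mathrm{U}}]^T\in Z$, let $\bar u^{n+1/2}\in V$ be arbitrary, and suppose $z^{n+1}=[u^{n+1},r^{n+1}_{\mathrm{L}},r^{n+1}_{\mathrm{U}}]^T\in Z$ satisfies \[ \frac{z^{n+1}-z^n}{\Delta t}=\mathcal{L}(\bar u^{n+1/2})\,\nabla\tilde E(z^{n+1/2}),\qquad z^{n+1/2}=\tfrac12(z^{n+1}+z^n), \] with all terms well-defined. Let $\tilde E^k=\frac12\langle u^k,Lu^k\rangle+(r^k_{\mathrm{L}})^2-(r^k_{\mathrm{U}})^2$ for $k=n,n+1$. If $D$ is skew-symmetric, then $\tilde E^{n+1}=\tilde E^n$. If $D$ is negative semidefinite, then $\tilde E^{n+1}\le\tilde E^n$.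
   Context: $I$ is the identity on $V$. $D$ skew-symmetric means $\langle Dv,w\rangle=-\langle v,Dw\rangle$ on its domain; negative semidefinite means $\langle v,Dv\rangle\le0$. In the paper's Crank–Nicolson-type SAV scheme, $\bar u^{n+1/2}$ is chosen as a (locally) $O(\Delta t^2)$ approximation of the midpoint value, but the conclusion holds for any choice. *)

From HB Require Import structures.
From mathcomp Require Import all_boot all_order all_algebra.
From mathcomp Require Import all_classical all_reals all_analysis.
Set Implicit Arguments. Unset Strict Implicit. Unset Printing Implicit Defensive.
Import Order.TTheory GRing.Theory Num.Theory.
Import numFieldNormedType.Exports.
Local Open Scope ring_scope.
Local Open Scope classical_set_scope.

Definition is_inner_product (R : realType) (V : normedModType R)
  (ip : V -> V -> R) : Prop :=
  [/\ forall u v, ip u v = ip v u,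
      forall (a : R) u v w, ip (a *: u + v) w = a * ip u w + ip v w
    & forall v, `|v| = Num.sqrt (ip v v)].

Definition C1_with_gradient (R : realType) (V : normedModType R)
  (ip : V -> V -> R) (E : V -> R) (gradE : V -> V) : Prop :=
  [/\ forall u, differentiable E u,
      forall u v, 'd E u v = ip (gradE u) v
    & continuous gradE].

Definition phi (R : realType) (V : lmodType R) (E : V -> R) (gradE : V -> V)
  (a : R) (u : V) : V :=
  (2 * Num.sqrt (E u + a))^-1 *: gradE u.

(* Elements of Z = V x R x R are triples ((u, rL), rU). *)
Definition Lright (R : realType) (V : lmodType R) (pL pU : V)
  (z : V * R * R) : V * R * R :=
  (z.1.1 + z.1.2 *: pL + z.2 *: pU, z.1.2, z.2).
Definition Lmid (R : realType) (V : lmodType R) (D : V -> V)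
  (z : V * R * R) : V * R * R := (D z.1.1, 0, 0).
Definition Lleft (R : realType) (V : lmodType R) (ip : V -> V -> R)
  (pL pU : V) (z : V * R * R) : V * R * R :=
  (z.1.1, ip pL z.1.1 + z.1.2, ip pU z.1.1 + z.2).

Definition Lop (R : realType) (V : lmodType R) (ip : V -> V -> R)
  (D : V -> V) (pL pU : V) (z : V * R * R) : V * R * R :=
  Lleft ip pL pU (Lmid D (Lright pL pU z)).

Definition gradEt (R : realType) (V : lmodType R) (L : V -> V)
  (z : V * R * R) : V * R * R := (L z.1.1, 2 * z.1.2, - 2 * z.2).

Definition Et (R : realType) (V : lmodType R) (ip : V -> V -> R)
  (L : V -> V) (z : V * R * R) : R :=
  2^-1 * ip z.1.1 (L z.1.1) + z.1.2 ^+ 2 - z.2 ^+ 2.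

Definition zadd (R : realType) (V : lmodType R) (z w : V * R * R) : V * R * R :=
  (z.1.1 + w.1.1, z.1.2 + w.1.2, z.2 + w.2).
Definition zscale (R : realType) (V : lmodType R) (c : R) (z : V * R * R)
  : V * R * R := (c *: z.1.1, c * z.1.2, c * z.2).
Definition zsub (R : realType) (V : lmodType R) (z w : V * R * R) : V * R * R :=
  zadd z (zscale (-1) w).

From HB Require Import structures.
From mathcomp Require Import all_boot all_order all_algebra.
From mathcomp Require Import all_classical all_reals all_analysis.
From mathcomp Require Import ring.
Set Implicit Arguments. Unset Strict Implicit. Unset Printing Implicit Defensive.
Import Order.TTheory GRing.Theory Num.Theory.
Import numFieldNormedType.Exports.
Local Open Scope ring_scope.
Local Open Scope classical_set_scope.

(* Equip Z = V x R x R with the product inner product [zip].  Since the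
   energy is quadratic, its increment over a step is exactly the pairing of
   the step with the gradient at the midpoint.  The outer factors of L(u) are
   adjoint to each other for [zip], so pairing L(u) g with g gives
   <D v, v> for v the first component of the right factor applied to g.  The
   scheme therefore changes the energy by dt <D v, v>, which vanishes when D
   is skew-symmetric and is nonpositive when D is negative semidefinite. *)

Section SymmetricBilinearForm.
Variables (R : realType) (V : lmodType R) (ip : V -> V -> R).
Hypothesis ipC : forall u v, ip u v = ip v u.
Hypothesis ip_linear : forall (a : R) u v w, ip (a *: u + v) w = a * ip u w + ip v w.

Lemma ip0l w : ip 0 w = 0.
Proof.
have := ip_linear 1 0 0 w; rewrite scaler0 addr0 mul1r.
by move/(congr1 (fun t => t - ip 0 w)); rewrite addrK subrr.
Qed.

Lemma ipDl u v w : ip (u + v) w = ip u w + ip v w.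
Proof. by rewrite -[u]scale1r ip_linear scale1r mul1r. Qed.

Lemma ipZl a u w : ip (a *: u) w = a * ip u w.
Proof. by rewrite -[a *: u]addr0 ip_linear ip0l addr0. Qed.

Lemma ipDr u v w : ip w (u + v) = ip w u + ip w v.
Proof. by rewrite ipC ipDl !(ipC w). Qed.

Lemma ipZr a u w : ip w (a *: u) = a * ip w u.
Proof. by rewrite ipC ipZl (ipC w). Qed.

Lemma skew_form_diag (D : V -> V) v :
  (forall v w, ip (D v) w = - ip v (D w)) -> ip (D v) v = 0.
Proof.
move=> skew; have := skew v v; rewrite (ipC v) => /eqP.
by rewrite -subr_eq0 opprK -mulr2n mulrn_eq0 /= => /eqP.
Qed.

Definition zip (z z' : V * R * R) : R :=
  ip z.1.1 z'.1.1 + z.1.2 * z'.1.2 + z.2 * z'.2.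

Lemma zipZl c z z' : zip (zscale c z) z' = c * zip z z'.
Proof. by rewrite /zip /= ipZl; ring. Qed.

Lemma zip_Lleft (pL pU : V) z z' :
  zip (Lleft ip pL pU z) z' = zip z (Lright pL pU z').
Proof. by rewrite /zip /= !ipDr !ipZr (ipC pL) (ipC pU); ring. Qed.

Lemma zip_Lmid (D : V -> V) z z' : zip (Lmid D z) z' = ip (D z.1.1) z'.1.1.
Proof. by rewrite /zip /= !mul0r !addr0. Qed.

Lemma zip_Lop (D : V -> V) (pL pU : V) g :
  zip (Lop ip D pL pU g) g =
    ip (D (Lright pL pU g).1.1) (Lright pL pU g).1.1.
Proof. by rewrite /Lop zip_Lleft zip_Lmid. Qed.

Lemma Et_sub_midpoint (L : {linear V -> V}) z1 z0 :
  (forall u v, ip (L u) v = ip u (L v)) ->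
  Et ip L z1 - Et ip L z0 =
    zip (zsub z1 z0) (gradEt L (zscale 2^-1 (zadd z1 z0))).
Proof.
move=> Lsym; have cross : ip z1.1.1 (L z0.1.1) = ip z0.1.1 (L z1.1.1).
  by rewrite ipC Lsym.
rewrite /zip /Et /= [L (_ *: _)]linearZ [L (_ + _)]linearD.
rewrite ipZr !ipDl !ipDr !ipZl cross.
by field.
Qed.

End SymmetricBilinearForm.

Lemma zscaleKV (R : realType) (V : lmodType R) (c : R) (z : V * R * R) :
  c != 0 -> zscale c (zscale c^-1 z) = z.
Proof.
move=> c0; case: z => [[u a] b].
by rewrite /zscale /= scalerA !mulrA mulfV // scale1r !mul1r.
Qed.

Theorem lemma3p1 (R : realType) (V : completeNormedModType R)
  (ip : V -> V -> R) (D L : {linear V -> V})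
  (EL EU : V -> R) (gradEL gradEU : V -> V) (aL aU : R)
  (dt : R) (zn zn1 : V * R * R) (ubar : V) :
  is_inner_product ip ->
  (forall u v, ip (L u) v = ip u (L v)) ->
  (forall u, 0 <= ip u (L u)) ->
  C1_with_gradient ip EL gradEL ->
  C1_with_gradient ip EU gradEU ->
  (exists m : R, forall v, m <= EL v) ->
  (exists m : R, forall v, m <= EU v) ->
  - inf (range EL) < aL ->
  - inf (range EU) < aU ->
  0 < dt ->
  zscale dt^-1 (zsub zn1 zn) =
    Lop ip D (phi EL gradEL aL ubar) (phi EU gradEU aU ubar)
      (gradEt L (zscale 2^-1 (zadd zn1 zn))) ->
  ((forall v w, ip (D v) w = - ip v (D w)) -> Et ip L zn1 = Et ip L zn) /\
  ((forall v, ip v (D v) <= 0) -> Et ip L zn1 <= Et ip L zn).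
Proof.
move=> [ipC ip_linear _] Lsym _ _ _ _ _ _ _ dt_gt0 scheme.
set g := gradEt L _ in scheme.
set v := (Lright (phi EL gradEL aL ubar) (phi EU gradEU aU ubar) g).1.1.
have step : zsub zn1 zn = zscale dt (Lop ip D (phi EL gradEL aL ubar)
                                       (phi EU gradEU aU ubar) g).
  by rewrite -scheme zscaleKV // gt_eqF.
have increment : Et ip L zn1 - Et ip L zn = dt * ip (D v) v.
  rewrite (Et_sub_midpoint ipC ip_linear) // step (zipZl ip_linear).
  by rewrite (zip_Lop ipC ip_linear).
split=> [skew | nsd].
  by apply/eqP; rewrite -subr_eq0 increment (skew_form_diag ipC) ?mulr0.
rewrite -subr_le0 increment; apply: mulr_ge0_le0; first exact: ltW.
by rewrite ipC.
Qed.
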